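(* Let $P>0$, $\Delta>0$, $T\in\mathbb{N}$, and $H_1,H_2\ge 0$. Define the quantizer $q_r(x)=\lfloor x/\Delta\rfloor\Delta$ for $x\le T\Delta$ and $q_r(x)=T\Delta$ for $x>T\Delta$, and set $a_i=q_r(H_i)$. Suppose $a_1\ge a_2$. Let $$\alpha_{q_r}=\frac{2a_2}{\sqrt{(a_1+a_2)^2+4a_1a_2^2P}+(a_1+a_2)}\ \text{ if } a_1>0,\ a_2>0,\qquad \alpha_{q_r}=0 \text{ otherwise},$$ and $$r_{1,q_r}=\log_2(1+P\alpha_{q_r}a_1),\qquad r_{2,q_r}=\log_2\Big(1+\frac{P a_2(1-\alpha_{q_r})}{P a_2\alpha_{q_r}+1}\Big).$$ Then the rates $r_{1,q_r}$ and $r_{2,q_r}$ are achievable, i.e. $$r_{2,q_r}\le \log_2\Big(1+\frac{PH_2(1-\alpha_{q_r})}{PH_2\alpha_{q_r}+1}\Big),\quad r_{2,q_r}\le \log_2\Big(1+\frac{PH_1(1-\alpha_{q_r})}{PH_1\alpha_{q_r}+1}\Big),\quad r_{1,q_r}\le\log_2(1+P\alpha_{q_r}H_1).$$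
   Context: Two-user downlink NOMA with total power $P$, unit noise variance, true channel gains $H_1,H_2$. The base station gives power fraction $\alpha$ to $s_1$ (Receiver 1, treated as the stronger receiver since $q_r(H_1)\ge q_r(H_2)$) and $1-\alpha$ to $s_2$. Achievability means that each transmitted rate is at most the corresponding capacity under successive interference cancellation: Receiver 2 decodes $s_2$ treating $s_1$ as noise (first bound); Receiver 1 first decodes $s_2$ treating $s_1$ as noise (second bound), removes it, and then decodes $s_1$ interference-free (third bound). *)

From Stdlib Require Import Reals.
Open Scope R_scope.

Definition log2 (x : R) : R := ln x / ln 2.

(* floor of a real: Int_part r = up r - 1 is the integer floor *)
Definition floorR (x : R) : R := IZR (Int_part x).

Definition q_r (Delta : R) (T : nat) (x : R) : R :=
  if Rle_dec x (INR T * Delta) then floorR (x / Delta) * Delta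
  else INR T * Delta.

Definition alpha_q (P a1 a2 : R) : R :=
  if Rlt_dec 0 a1 then
    if Rlt_dec 0 a2 then
      2 * a2 / (sqrt ((a1 + a2)^2 + 4 * a1 * a2^2 * P) + (a1 + a2))
    else 0
  else 0.

(** The quantizer rounds down, so [0 <= a_i <= H_i], and [a_2 <= a_1] puts the
    power fraction [alpha] in [0, 1].  For such [alpha] both the SINR
    [P h (1 - alpha) / (P h alpha + 1)] and the SNR [P alpha h] are
    nondecreasing in the gain [h], and [log2] is increasing; hence a rate
    computed from a quantized gain stays below the capacity at any larger true
    gain.  The bound at Receiver 1 for [s_2] uses [a_2 <= a_1 <= H_1]. *)

From Stdlib Require Import Reals Lra Psatz.
Open Scope R_scope.

Lemma floorR_le (x : R) : floorR x <= x.
Proof. unfold floorR; apply base_Int_part. Qed.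

Lemma floorR_ge0 (x : R) : 0 <= x -> 0 <= floorR x.
Proof.
  intros hx; unfold floorR.
  destruct (base_Int_part x) as [_ hgt].
  assert (hz : (-1 < Int_part x)%Z) by (apply lt_IZR; lra).
  apply IZR_le; lia.
Qed.

Lemma q_r_le (Delta : R) (T : nat) (x : R) : 0 < Delta -> q_r Delta T x <= x.
Proof.
  intros hD; unfold q_r.
  destruct (Rle_dec x (INR T * Delta)); [|lra].
  assert (hfl : floorR (x / Delta) * Delta <= x / Delta * Delta).
  { apply Rmult_le_compat_r; [lra | apply floorR_le]. }
  replace (x / Delta * Delta) with x in hfl by (field; lra).
  exact hfl.
Qed.

Lemma q_r_ge0 (Delta : R) (T : nat) (x : R) :
  0 < Delta -> 0 <= x -> 0 <= q_r Delta T x.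
Proof.
  intros hD hx; unfold q_r.
  destruct (Rle_dec x (INR T * Delta)).
  - apply Rmult_le_pos; [apply floorR_ge0, Rle_mult_inv_pos | ]; lra.
  - apply Rmult_le_pos; [apply pos_INR | lra].
Qed.

Lemma alpha_q_ge0 (P a1 a2 : R) : 0 <= alpha_q P a1 a2.
Proof.
  unfold alpha_q.
  destruct (Rlt_dec 0 a1); [|lra].
  destruct (Rlt_dec 0 a2); [|lra].
  pose proof (sqrt_pos ((a1 + a2)^2 + 4 * a1 * a2^2 * P)).
  apply Rle_mult_inv_pos; lra.
Qed.

Lemma alpha_q_le1 (P a1 a2 : R) : a2 <= a1 -> alpha_q P a1 a2 <= 1.
Proof.
  intros h21; unfold alpha_q.
  destruct (Rlt_dec 0 a1); [|lra].
  destruct (Rlt_dec 0 a2); [|lra].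
  pose proof (sqrt_pos ((a1 + a2)^2 + 4 * a1 * a2^2 * P)).
  set (d := sqrt _ + (a1 + a2)).
  enough (0 <= 1 - 2 * a2 / d) by lra.
  replace (1 - 2 * a2 / d) with ((d - 2 * a2) / d) by (field; unfold d; lra).
  apply Rle_mult_inv_pos; unfold d; lra.
Qed.

Lemma log2_le (x y : R) : 0 < x -> x <= y -> log2 x <= log2 y.
Proof.
  intros hx hxy; unfold log2, Rdiv.
  apply Rmult_le_compat_r.
  - left; apply Rinv_0_lt_compat; pose proof ln_lt_2; lra.
  - destruct hxy as [hlt | ->]; [left; apply ln_increasing | right]; lra.
Qed.

Lemma sinr_le (P al x y : R) : 0 <= P -> 0 <= al <= 1 -> 0 <= x <= y ->
  P * x * (1 - al) / (P * x * al + 1) <= P * y * (1 - al) / (P * y * al + 1).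
Proof.
  intros hP hal hxy.
  assert (hPx : 0 <= P * x) by nra.
  assert (hPy : 0 <= P * y) by nra.
  assert (hx : 0 < P * x * al + 1) by nra.
  assert (hy : 0 < P * y * al + 1) by nra.
  enough (0 <= P * y * (1 - al) / (P * y * al + 1)
               - P * x * (1 - al) / (P * x * al + 1)) by lra.
  replace (P * y * (1 - al) / (P * y * al + 1) - P * x * (1 - al) / (P * x * al + 1))
    with (P * (1 - al) * (y - x) / ((P * x * al + 1) * (P * y * al + 1)))
    by (field; lra).
  apply Rle_mult_inv_pos.
  - apply Rmult_le_pos; [apply Rmult_le_pos |]; lra.
  - apply Rmult_lt_0_compat; assumption.
Qed.

Lemma sinr_rate_le (P al x y : R) : 0 <= P -> 0 <= al <= 1 -> 0 <= x <= y ->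
  log2 (1 + P * x * (1 - al) / (P * x * al + 1)) <=
  log2 (1 + P * y * (1 - al) / (P * y * al + 1)).
Proof.
  intros hP hal hxy.
  apply log2_le.
  - assert (hPx : 0 <= P * x) by (apply Rmult_le_pos; lra).
    assert (0 <= P * x * (1 - al) / (P * x * al + 1)) by (apply Rle_mult_inv_pos; nra).
    lra.
  - apply Rplus_le_compat_l, sinr_le; assumption.
Qed.

Theorem lemma1 (P Delta : R) (T : nat) (H1 H2 : R)
  (hP : 0 < P) (hD : 0 < Delta) (hH1 : 0 <= H1) (hH2 : 0 <= H2)
  (hord : q_r Delta T H1 >= q_r Delta T H2) :
  let a1 := q_r Delta T H1 in
  let a2 := q_r Delta T H2 in
  let al := alpha_q P a1 a2 in
  let r1 := log2 (1 + P * al * a1) in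
  let r2 := log2 (1 + P * a2 * (1 - al) / (P * a2 * al + 1)) in
  r2 <= log2 (1 + P * H2 * (1 - al) / (P * H2 * al + 1)) /\
  r2 <= log2 (1 + P * H1 * (1 - al) / (P * H1 * al + 1)) /\
  r1 <= log2 (1 + P * al * H1).
Proof.
  intros a1 a2 al r1 r2.
  assert (ha1 : a1 <= H1) by apply q_r_le, hD.
  assert (ha2 : a2 <= H2) by apply q_r_le, hD.
  assert (ha1_ge0 : 0 <= a1) by (apply q_r_ge0; assumption).
  assert (ha2_ge0 : 0 <= a2) by (apply q_r_ge0; assumption).
  assert (h21 : a2 <= a1) by (apply Rge_le; exact hord).
  assert (hal : 0 <= al <= 1) by (split; [apply alpha_q_ge0 | apply alpha_q_le1, h21]).
  split; [|split].
  - apply sinr_rate_le; lra.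
  - apply sinr_rate_le; lra.
  - assert (hPal : 0 <= P * al) by (apply Rmult_le_pos; lra).
    apply log2_le; nra.
Qed.
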